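(* Let $H$ be a quasitriangular Hopf algebra over $\mathbb{C}$ with quasitriangular structure $\mathcal{R}\in H\otimes H$, and $A$ a Hopf algebra non-degenerately paired with $H$, such that $H$ is factorisable, i.e. the map $\mathcal{Q}:A\to H$, $\mathcal{Q}(a)=(a\otimes{\rm id})(\mathcal{R}_{21}\mathcal{R})$, is a linear isomorphism. Then $\mathcal{Q}$ restricts to a linear isomorphism $\ker\epsilon\subset A\to\ker\epsilon\subset H$, and it intertwines the action of the quantum double $H\bowtie A^{\rm op}$ on $\ker\epsilon\subset A$ given by \[h\triangleright a=a_{(2)}\langle h,(Sa_{(1)})a_{(3)}\rangle,\qquad b\triangleright a=\langle b,\mathcal{R}'^{(1)}\mathcal{R}^{(2)}\rangle\langle a_{(1)},\mathcal{R}'^{(2)}\rangle\langle a_{(3)},\mathcal{R}^{(1)}\rangle a_{(2)}-\langle b,\mathcal{Q}(a)\rangle1\] ($h\in H$, $b\in A$) with the action on $\ker\epsilon\subset H$ given by $h\triangleright x=h_{(1)}xSh_{(2)}$, $b\triangleright x=\langle b,x_{(1)}\rangle x_{(2)}-\langle b,x\rangle1$. In particular, the quantum double subrepresentations of $\ker\epsilon\subset H$ (quantum tangent spaces) are exactly the images under $\mathcal{Q}$ of the subrepresentations of $\ker\epsilon\subset A$ under the first action.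
   Context: Hopf pairing conventions: $\langle hg,a\rangle=\langle h,a_{(1)}\rangle\langle g,a_{(2)}\rangle$, $\langle h,ab\rangle=\langle h_{(1)},a\rangle\langle h_{(2)},b\rangle$, compatible with units, counits, antipodes; Sweedler notation. Quasitriangular: $\mathcal{R}=\mathcal{R}^{(1)}\otimes\mathcal{R}^{(2)}$ invertible with $(\Delta\otimes{\rm id})\mathcal{R}=\mathcal{R}_{13}\mathcal{R}_{23}$, $({\rm id}\otimes\Delta)\mathcal{R}=\mathcal{R}_{13}\mathcal{R}_{12}$, $\Delta^{\rm op}h=\mathcal{R}(\Delta h)\mathcal{R}^{-1}$; $\mathcal{R}'$ denotes a second copy of $\mathcal{R}$; $\mathcal{R}_{21}=\mathcal{R}^{(2)}\otimes\mathcal{R}^{(1)}$. Quantum double $H\bowtie A^{\rm op}$: $H\otimes A$ with product $(h\otimes a)(g\otimes b)=hg_{(2)}\otimes ba_{(2)}\langle g_{(1)},a_{(1)}\rangle\langle g_{(3)},Sa_{(3)}\rangle$. *)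

(* Tensors are represented by finite lists of pure tensors; two tensors are
   equal iff every multilinear form (into C) takes the same value on them. *)
From HB Require Import structures.
From mathcomp Require Import all_boot all_order all_algebra.
From mathcomp Require Import reals Rstruct.
From mathcomp Require Import complex.
Set Implicit Arguments. Unset Strict Implicit. Unset Printing Implicit Defensive.
Import Order.TTheory GRing.Theory Num.Theory.
Local Open Scope ring_scope.

Definition CC : fieldType := complex Rdefinitions.R.

Section Tensors.
Variables U V W : lmodType CC.

Definition bilin (f : U -> V -> CC) : Prop :=
  (forall a u u' v, f (a *: u + u') v = a * f u v + f u' v) /\
  (forall a u v v', f u (a *: v + v') = a * f u v + f u v').

Definition trilin (f : U -> V -> W -> CC) : Prop :=
  (forall a u u' v w, f (a *: u + u') v w = a * f u v w + f u' v w) /\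
  (forall a u v v' w, f u (a *: v + v') w = a * f u v w + f u v' w) /\
  (forall a u v w w', f u v (a *: w + w') = a * f u v w + f u v w').

Definition teq2 (s t : seq (U * V)) : Prop :=
  forall f, bilin f ->
    \sum_(p <- s) f p.1 p.2 = \sum_(p <- t) f p.1 p.2.

Definition teq3 (s t : seq (U * V * W)) : Prop :=
  forall f, trilin f ->
    \sum_(p <- s) f p.1.1 p.1.2 p.2 = \sum_(p <- t) f p.1.1 p.1.2 p.2.
End Tensors.

Record HopfStr (H : algType CC) := {
  cop : H -> seq (H * H);
  eps : H -> CC;
  anti : H -> H }.

Section Hopf.
Variable H : algType CC.
Variable hs : HopfStr H.

Local Notation D := (cop hs).
Local Notation e := (eps hs).
Local Notation S := (anti hs).

Definition tmul2 (s t : seq (H * H)) : seq (H * H) :=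
  [seq (p.1 * q.1, p.2 * q.2) | p <- s, q <- t].

Definition cop3 (x : H) : seq (H * H * H) :=
  [seq (q.1, q.2, p.2) | p <- D x, q <- D p.1].

Definition is_hopf : Prop :=
  [/\ [/\ (forall a x y, teq2 (D (a *: x + y))
                          ([seq (a *: p.1, p.2) | p <- D x] ++ D y)),
      (forall x y, teq2 (D (x * y)) (tmul2 (D x) (D y))),
      teq2 (D 1) [:: (1, 1)] &
      (forall x, teq3 (cop3 x) [seq (p.1, q.1, q.2) | p <- D x, q <- D p.2])],
      [/\ (forall a x y, e (a *: x + y) = a * e x + e y),
          (forall x y, e (x * y) = e x * e y) & e 1 = 1],
      (forall x, \sum_(p <- D x) e p.1 *: p.2 = x /\
                 \sum_(p <- D x) e p.2 *: p.1 = x) &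
      [/\ (forall a x y, S (a *: x + y) = a *: S x + S y),
          (forall x, \sum_(p <- D x) S p.1 * p.2 = e x *: 1) &
          (forall x, \sum_(p <- D x) p.1 * S p.2 = e x *: 1)] ].

Definition quasitriangular (R : seq (H * H)) : Prop :=
  [/\ (exists Rinv : seq (H * H),
        [/\ teq2 (tmul2 R Rinv) [:: (1, 1)],
            teq2 (tmul2 Rinv R) [:: (1, 1)] &
            forall h, teq2 [seq (p.2, p.1) | p <- D h]
                           (tmul2 (tmul2 R (D h)) Rinv)]),
      (* (Delta (x) id) R = R13 R23 *)
      teq3 [seq (q.1, q.2, p.2) | p <- R, q <- D p.1]
           [seq (p.1, q.1, p.2 * q.2) | p <- R, q <- R] &
      (* (id (x) Delta) R = R13 R12 *)
      teq3 [seq (p.1, q.1, q.2) | p <- R, q <- D p.2]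
           [seq (p.1 * q.1, q.2, p.2) | p <- R, q <- R] ].
End Hopf.

Section Pairing.
Variables H A : algType CC.
Variables (hH : HopfStr H) (hA : HopfStr A).
Variable pr : H -> A -> CC.

Definition hopf_pairing : Prop :=
  [/\ bilin pr,
      (forall h g a, pr (h * g) a = \sum_(q <- cop hA a) pr h q.1 * pr g q.2),
      (forall h a b, pr h (a * b) = \sum_(q <- cop hH h) pr q.1 a * pr q.2 b),
      ((forall a, pr 1 a = eps hA a) /\ (forall h, pr h 1 = eps hH h)) &
      (forall h a, pr (anti hH h) a = pr h (anti hA a))].

Definition nondegenerate_pairing : Prop :=
  (forall h, (forall a, pr h a = 0) -> h = 0) /\
  (forall a, (forall h, pr h a = 0) -> a = 0).

Variable R : seq (H * H).

(* Q(a) = (a (x) id)(R21 R) = sum <R^(2) R'^(1), a> R^(1) R'^(2) *)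
Definition Qmap (a : A) : H :=
  \sum_(p <- R) \sum_(q <- R) pr (p.2 * q.1) a *: (p.1 * q.2).

Definition actHA (h : H) (a : A) : A :=
  \sum_(t <- cop3 hA a) pr h (anti hA t.1.1 * t.2) *: t.1.2.

Definition actAA (b : A) (a : A) : A :=
  \sum_(p <- R) \sum_(q <- R) \sum_(t <- cop3 hA a)
      (pr (p.1 * q.2) b * pr p.2 t.1.1 * pr q.1 t.2) *: t.1.2
  - pr (Qmap a) b *: 1.

Definition actHH (h : H) (x : H) : H :=
  \sum_(p <- cop hH h) p.1 * x * anti hH p.2.

Definition actAH (b : A) (x : H) : H :=
  \sum_(p <- cop hH x) pr p.1 b *: p.2 - pr x b *: 1.

(* subrepresentations of the quantum double H |><| A^op (generated by H and
   A^op): linear subspaces of ker eps stable under both actions *)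
Definition subspace (T : lmodType CC) (V : T -> Prop) : Prop :=
  V 0 /\ forall c x y, V x -> V y -> V (c *: x + y).

Definition double_subrepA (V : A -> Prop) : Prop :=
  [/\ subspace V, (forall a, V a -> eps hA a = 0),
      (forall h a, V a -> V (actHA h a)) &
      (forall b a, V a -> V (actAA b a))].

Definition double_subrepH (W : H -> Prop) : Prop :=
  [/\ subspace W, (forall x, W x -> eps hH x = 0),
      (forall h x, W x -> W (actHH h x)) &
      (forall b x, W x -> W (actAH b x))].
End Pairing.

From HB Require Import structures.
From mathcomp Require Import all_boot all_algebra.
Import GRing.Theory.
Set Implicit Arguments. Unset Strict Implicit. Unset Printing Implicit Defensive.
Local Open Scope ring_scope.

(* The counit identities (eps (x) id) R =
   (id (x) eps) R = 1 give eps (Q a) = eps a and Q 1 = 1, so the bijection Q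
   maps ker eps onto ker eps.  Since R21 R commutes with the image of the
   coproduct, Q turns the coadjoint action of H into the adjoint one; since
   (id (x) Delta)(R21 R) = R21 (R21 R)_13 R12, it turns the twisted coregular
   action of A into the coregular one.  Tensor identities are tested against all
   multilinear forms, and elements of H are separated by the pairing. *)

Section LinearFor.
Variables (U : lmodType CC) (V : zmodType) (s : GRing.Scale.law CC V).
Variables (f : U -> V) (lin_f : linear_for s f).

Lemma linear_forB u v : f (u - v) = f u - f v.
Proof. exact: GRing.zmod_morphism_linear. Qed.

Lemma linear_for0 : f 0 = 0.
Proof. by have := linear_forB 0 0; rewrite !subrr. Qed.

Lemma linear_forD u v : f (u + v) = f u + f v.
Proof. exact: (GRing.semilinear_linear lin_f).2. Qed.

Lemma linear_forZ a u : f (a *: u) = s a (f u).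
Proof. exact: GRing.scalable_linear. Qed.

Lemma linear_for_sum (I : Type) (r : seq I) (P : pred I) (F : I -> U) :
  f (\sum_(i <- r | P i) F i) = \sum_(i <- r | P i) f (F i).
Proof. exact: (big_morph f linear_forD linear_for0). Qed.
End LinearFor.

Section Closure.
Variables U V W X : lmodType CC.

Lemma linear_id : linear (fun u : U => u).
Proof. by []. Qed.

Lemma linear_mulr (B : algType CC) (m : U -> B) z :
  linear m -> linear (fun u => m u * z).
Proof. by move=> lin_m a u v; rewrite lin_m mulrDl scalerAl. Qed.

Lemma linear_mull (B : algType CC) (m : U -> B) z :
  linear m -> linear (fun u => z * m u).
Proof. by move=> lin_m a u v; rewrite lin_m mulrDr scalerAr. Qed.

Lemma scalar_big (I : Type) (r : seq I) (P : pred I) (F : I -> U -> CC) :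
  (forall i, scalar (F i)) -> scalar (fun u => \sum_(i <- r | P i) F i u).
Proof.
move=> lin_F a u v; rewrite mulr_sumr -big_split.
by apply: eq_bigr => i _; rewrite lin_F.
Qed.

Lemma scalar_mull c (f : U -> CC) : scalar f -> scalar (fun u => c * f u).
Proof. by move=> lin_f a u v; rewrite lin_f mulrDr mulrCA. Qed.

Lemma scalar_mulr c (f : U -> CC) : scalar f -> scalar (fun u => f u * c).
Proof. by move=> lin_f a u v; rewrite lin_f mulrDl mulrA. Qed.

Lemma bilinP (f : U -> V -> CC) :
  (forall v, scalar (fun u => f u v)) -> (forall u, scalar (f u)) -> bilin f.
Proof. by move=> lin1 lin2; split=> *; [apply: lin1 | apply: lin2]. Qed.

Lemma trilinP (f : U -> V -> W -> CC) :
  (forall v w, scalar (fun u => f u v w)) -> (forall u w, scalar (fun v => f u v w)) ->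
  (forall u v, scalar (f u v)) -> trilin f.
Proof.
by move=> lin1 lin2 lin3; split; [|split] => *; [apply: lin1 | apply: lin2 | apply: lin3].
Qed.

Lemma bilin_scalarl (f : U -> V -> CC) (m : X -> U) v :
  bilin f -> linear m -> scalar (fun x => f (m x) v).
Proof. by case=> lin1 _ lin_m a x y; rewrite lin_m lin1. Qed.

Lemma bilin_scalarr (f : U -> V -> CC) (m : X -> V) u :
  bilin f -> linear m -> scalar (fun x => f u (m x)).
Proof. by case=> _ lin2 lin_m a x y; rewrite lin_m lin2. Qed.
End Closure.

Lemma sum_tmul2 (B : algType CC) (r t : seq (B * B)) (F : B * B -> CC) :
  \sum_(x <- tmul2 r t) F x = \sum_(p <- r) \sum_(q <- t) F (p.1 * q.1, p.2 * q.2).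
Proof. exact: big_allpairs_dep. Qed.

Section HopfAxioms.
Variables (H : algType CC) (hs : HopfStr H) (hopf : is_hopf hs).
Local Notation D := (cop hs).
Local Notation e := (eps hs).
Local Notation S := (anti hs).

Lemma eps_scalar : scalar e.
Proof. by case: hopf => _ [lin_e _ _] _ _. Qed.

Lemma epsM x y : e (x * y) = e x * e y.
Proof. by case: hopf => _ [_ -> _] _ _. Qed.

Lemma eps1 : e 1 = 1.
Proof. by case: hopf => _ [_ _ ->] _ _. Qed.

Lemma antipode_linear : linear S.
Proof. by case: hopf => _ _ _ [lin_S _ _]. Qed.

Lemma cop_scalar (F : H * H -> CC) :
  bilin (fun x y => F (x, y)) -> scalar (fun z => \sum_(p <- D z) F p).
Proof.
case: hopf => [[copZ _ _ _] _ _ _] lin_F a x y.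
have pairE z : \sum_(p <- D z) F p = \sum_(p <- D z) F (p.1, p.2).
  by apply: eq_bigr => -[].
rewrite !pairE (copZ a x y _ lin_F) big_cat big_map /= mulr_sumr.
apply: congr2 => //; apply: eq_bigr => p _.
exact: (linear_forZ (bilin_scalarl p.2 lin_F (@linear_id _))).
Qed.

Lemma cop_mul (f : H -> H -> CC) x y : bilin f ->
  \sum_(p <- D (x * y)) f p.1 p.2 =
  \sum_(p <- D x) \sum_(q <- D y) f (p.1 * q.1) (p.2 * q.2).
Proof.
case: hopf => [[_ copM _ _] _ _ _] lin_f.
by rewrite (copM x y f lin_f) sum_tmul2.
Qed.

Lemma coassoc (f : H -> H -> H -> CC) x : trilin f ->
  \sum_(p <- D x) \sum_(q <- D p.1) f q.1 q.2 p.2 =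
  \sum_(p <- D x) \sum_(q <- D p.2) f p.1 q.1 q.2.
Proof.
case: hopf => [[_ _ _ coA] _ _ _] lin_f.
by have := coA x f lin_f; rewrite /cop3 !big_allpairs_dep.
Qed.

Section LinearForm.
Variables (g : H -> CC) (lin_g : scalar g).

Lemma sum_counitl x : \sum_(p <- D x) e p.1 * g p.2 = g x.
Proof.
case: hopf => _ _ /(_ x)[counitl _] _.
rewrite -[in RHS]counitl (linear_for_sum lin_g).
by apply: eq_bigr => p _; rewrite (linear_forZ lin_g).
Qed.

Lemma sum_counitr x : \sum_(p <- D x) e p.2 * g p.1 = g x.
Proof.
case: hopf => _ _ /(_ x)[_ counitr] _.
rewrite -[in RHS]counitr (linear_for_sum lin_g).
by apply: eq_bigr => p _; rewrite (linear_forZ lin_g).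
Qed.

Lemma sum_antipodel x : \sum_(p <- D x) g (S p.1 * p.2) = e x * g 1.
Proof.
case: hopf => _ _ _ [_ antipodel _].
by rewrite -(linear_for_sum lin_g) antipodel (linear_forZ lin_g).
Qed.

Lemma sum_antipoder x : \sum_(p <- D x) g (p.1 * S p.2) = e x * g 1.
Proof.
case: hopf => _ _ _ [_ _ antipoder].
by rewrite -(linear_for_sum lin_g) antipoder (linear_forZ lin_g).
Qed.
End LinearForm.
End HopfAxioms.

Lemma eps_scalar_comp (H : algType CC) (hs : HopfStr H) (U : lmodType CC)
  (m : U -> H) : is_hopf hs -> linear m -> scalar (fun u => eps hs (m u)).
Proof. by move=> hopf lin_m a u v; rewrite lin_m (eps_scalar hopf). Qed.

Lemma antipode_linear_comp (H : algType CC) (hs : HopfStr H) (U : lmodType CC)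
  (m : U -> H) : is_hopf hs -> linear m -> linear (fun u => anti hs (m u)).
Proof. by move=> hopf lin_m a u v; rewrite lin_m (antipode_linear hopf). Qed.

Section PairingAxioms.
Variables (H A : algType CC) (hH : HopfStr H) (hA : HopfStr A) (pr : H -> A -> CC).
Hypothesis pairing : hopf_pairing hH hA pr.

Lemma pairing_scalarl c : scalar (pr^~ c).
Proof. by case: pairing => [[lin1 _] _ _ _ _] a u v; apply: lin1. Qed.

Lemma pairing_scalarr x : scalar (pr x).
Proof. by case: pairing => [[_ lin2] _ _ _ _] a u v; apply: lin2. Qed.

Lemma pairingMl h g a : pr (h * g) a = \sum_(q <- cop hA a) pr h q.1 * pr g q.2.
Proof. by case: pairing => _ -> _ _ _. Qed.

Lemma pairingMr h a b : pr h (a * b) = \sum_(q <- cop hH h) pr q.1 a * pr q.2 b.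
Proof. by case: pairing => _ _ -> _ _. Qed.

Lemma pairing1l a : pr 1 a = eps hA a.
Proof. by case: pairing => _ _ _ [-> _] _. Qed.

Lemma pairing1r h : pr h 1 = eps hH h.
Proof. by case: pairing => _ _ _ [_ ->] _. Qed.

Lemma pairing_antipode h a : pr (anti hH h) a = pr h (anti hA a).
Proof. by case: pairing => _ _ _ _ ->. Qed.

Lemma pairingM3 x y z a : pr (x * y * z) a =
  \sum_(t <- cop3 hA a) pr x t.1.1 * pr y t.1.2 * pr z t.2.
Proof.
rewrite /cop3 big_allpairs_dep pairingMl; apply: eq_bigr => q _.
by rewrite pairingMl mulr_suml.
Qed.

Lemma pairing_separatesH x y : nondegenerate_pairing pr ->
  (forall c, pr x c = pr y c) -> x = y.
Proof.
case=> nondegH _ prxy; apply/eqP; rewrite -subr_eq0; apply/eqP.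
by apply: nondegH => c; rewrite (linear_forB (pairing_scalarl c)) prxy subrr.
Qed.

Lemma pairing_scalarl_comp (U : lmodType CC) (m : U -> H) c :
  linear m -> scalar (fun u => pr (m u) c).
Proof. by move=> lin_m a u v; rewrite lin_m (pairing_scalarl c). Qed.
End PairingAxioms.

Ltac linearity := repeat first
  [ apply: linear_id | apply: linear_mulr | apply: linear_mull
  | apply: antipode_linear_comp; first done
  | apply: scalar_big => ? | apply: scalar_mull | apply: scalar_mulr
  | apply: pairing_scalarl_comp; first eassumption
  | apply: eps_scalar_comp; first done
  | apply: cop_scalar; first done
  | apply: bilinP => [?|?] /=
  | apply: trilinP => [? ?|? ?|? ?] /=
  | apply: bilin_scalarl; first eassumption
  | apply: bilin_scalarr; first eassumption ].

Section Factorisable.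
Variables (H A : algType CC) (hH : HopfStr H) (hA : HopfStr A).
Variables (pr : H -> A -> CC) (R : seq (H * H)).
Hypotheses (hopfH : is_hopf hH) (pairing : hopf_pairing hH hA pr).
Hypotheses (nondeg : nondegenerate_pairing pr) (qtR : quasitriangular hH R).
Local Notation D := (cop hH).
Local Notation eH := (eps hH).
Local Notation S := (anti hH).
Local Notation Q := (Qmap pr R).
Implicit Types G : H -> H -> CC.

(* The value of the bilinear form G on R21 R = R^(2) R'^(1) (x) R^(1) R'^(2);
   thus Q a is obtained by pairing the first leg of R21 R with a. *)
Definition onR21R G := \sum_(p <- R) \sum_(q <- R) G (p.2 * q.1) (p.1 * q.2).

Lemma eq_onR21R G G' : (forall X Y, G X Y = G' X Y) -> onR21R G = onR21R G'.
Proof. by move=> eqG; apply: eq_bigr => p _; apply: eq_bigr => q _. Qed.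

Lemma onR21R_sum (I : Type) (r : seq I) (G : I -> H -> H -> CC) :
  onR21R (fun X Y => \sum_(i <- r) G i X Y) = \sum_(i <- r) onR21R (G i).
Proof.
rewrite /onR21R; under eq_bigr do rewrite exchange_big.
by rewrite exchange_big; apply: eq_bigr => i _; rewrite exchange_big.
Qed.

Lemma onR21R_mull k G : onR21R (fun X Y => k * G X Y) = k * onR21R G.
Proof. by rewrite /onR21R mulr_sumr; apply: eq_bigr => p _; rewrite mulr_sumr. Qed.

Lemma onR21R_add G G' :
  onR21R (fun X Y => G X Y + G' X Y) = onR21R G + onR21R G'.
Proof. by rewrite /onR21R -big_split; apply: eq_bigr => p _; rewrite -big_split. Qed.

Lemma cop_id_R (f : H -> H -> H -> CC) : trilin f ->
  \sum_(p <- R) \sum_(q <- D p.1) f q.1 q.2 p.2 =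
  \sum_(p <- R) \sum_(q <- R) f p.1 q.1 (p.2 * q.2).
Proof. by case: qtR => _ copR _ lin_f; have := copR f lin_f; rewrite !big_allpairs_dep. Qed.

Lemma id_cop_R (f : H -> H -> H -> CC) : trilin f ->
  \sum_(p <- R) \sum_(q <- D p.2) f p.1 q.1 q.2 =
  \sum_(p <- R) \sum_(q <- R) f (p.1 * q.1) q.2 p.2.
Proof. by case: qtR => _ _ copR lin_f; have := copR f lin_f; rewrite !big_allpairs_dep. Qed.

Lemma R_rinv : exists Rinv : seq (H * H), forall f : H -> H -> CC, bilin f ->
  \sum_(p <- R) \sum_(r <- Rinv) f (p.1 * r.1) (p.2 * r.2) = f 1 1.
Proof.
have [[Rinv [RRinv _ _]] _ _] := qtR; exists Rinv => f lin_f.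
by have := RRinv f lin_f; rewrite sum_tmul2 big_seq1.
Qed.

(* Applying eps to the first leg of (Delta (x) id) R = R13 R23 gives
   R = (1 (x) (eps (x) id) R) R; cancel R by R^-1. *)
Lemma eps_R1 : \sum_(p <- R) eH p.1 *: p.2 = 1.
Proof.
have [Rinv RRinvE] := R_rinv.
apply: (pairing_separatesH pairing nondeg) => c.
rewrite (linear_for_sum (pairing_scalarl pairing c)).
under eq_bigr do rewrite (linear_forZ (pairing_scalarl pairing c)) /=.
pose g x y := \sum_(r <- Rinv) eH (x * r.1) * pr (y * r.2) c.
have lin_g : bilin g by rewrite /g; linearity.
transitivity (\sum_(p <- R) \sum_(q <- R) eH p.1 * g q.1 (p.2 * q.2)).
  apply: eq_bigr => p _; rewrite -mulr_sumr; congr (_ * _).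
  rewrite -[LHS]mul1r -(eps1 hopfH) -{1}[p.2]mulr1.
  rewrite -(RRinvE (fun x y => eH x * pr (p.2 * y) c)); last by linearity.
  by apply: eq_bigr => q _; apply: eq_bigr => r _; rewrite !mulrA.
rewrite -(cop_id_R (f := fun x y z => eH x * g y z)); last by linearity.
transitivity (\sum_(p <- R) g p.1 p.2).
  by apply: eq_bigr => p _; apply: (sum_counitl hopfH (g := g^~ p.2)); linearity.
by rewrite -[pr 1 c]mul1r -(eps1 hopfH); apply: (RRinvE (fun x y => eH x * pr y c)); linearity.
Qed.

Lemma eps_R2 : \sum_(p <- R) eH p.2 *: p.1 = 1.
Proof.
have [Rinv RRinvE] := R_rinv.
apply: (pairing_separatesH pairing nondeg) => c.
rewrite (linear_for_sum (pairing_scalarl pairing c)).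
under eq_bigr do rewrite (linear_forZ (pairing_scalarl pairing c)) /=.
pose g x y := \sum_(r <- Rinv) pr (x * r.1) c * eH (y * r.2).
have lin_g : bilin g by rewrite /g; linearity.
transitivity (\sum_(p <- R) \sum_(q <- R) g (p.1 * q.1) q.2 * eH p.2).
  apply: eq_bigr => p _; rewrite -mulr_suml mulrC; congr (_ * _).
  rewrite -[LHS]mulr1 -(eps1 hopfH) -{1}[p.1]mulr1.
  rewrite -(RRinvE (fun x y => pr (p.1 * x) c * eH y)); last by linearity.
  by apply: eq_bigr => q _; apply: eq_bigr => r _; rewrite !mulrA.
rewrite -(id_cop_R (f := fun x y z => g x y * eH z)); last by linearity.
transitivity (\sum_(p <- R) g p.1 p.2).
  apply: eq_bigr => p _; under eq_bigr do rewrite mulrC.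
  by apply: (sum_counitr hopfH (g := g p.1)); linearity.
by rewrite -[pr 1 c]mulr1 -(eps1 hopfH); apply: (RRinvE (fun x y => pr x c * eH y)); linearity.
Qed.

Lemma R_cop (G : H -> H -> CC) h : bilin G ->
  \sum_(p <- R) \sum_(k <- D h) G (p.1 * k.1) (p.2 * k.2) =
  \sum_(k <- D h) \sum_(p <- R) G (k.2 * p.1) (k.1 * p.2).
Proof.
move=> lin_G; have [[Rinv [_ RinvR copop]] _ _] := qtR.
have lin_GR : bilin (fun x y => \sum_(p <- R) G (x * p.1) (y * p.2)) by linearity.
rewrite -[RHS](big_map (fun k => (k.2, k.1)) xpredT
  (fun k => \sum_(p <- R) G (k.1 * p.1) (k.2 * p.2))) (copop h _ lin_GR) !sum_tmul2.
apply: eq_bigr => p _; apply: eq_bigr => k _ /=.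
have lin_Gpk : bilin (fun x y => G (p.1 * k.1 * x) (p.2 * k.2 * y)) by linearity.
have := RinvR _ lin_Gpk; rewrite sum_tmul2 big_seq1 /= !mulr1 => <-.
by apply: eq_bigr => r _; apply: eq_bigr => q _; rewrite !mulrA.
Qed.

(* R21 R Delta = R21 Delta^op R = Delta R21 R. *)
Lemma cop_R21R_comm (G : H -> H -> CC) h : bilin G ->
  \sum_(k <- D h) onR21R (fun X Y => G (k.1 * X) (k.2 * Y)) =
  \sum_(k <- D h) onR21R (fun X Y => G (X * k.1) (Y * k.2)).
Proof.
move=> lin_G; rewrite /onR21R.
transitivity (\sum_(q <- R) \sum_(k <- D h) \sum_(p <- R)
                G (k.1 * p.2 * q.1) (k.2 * p.1 * q.2)).
  under eq_bigr do rewrite exchange_big.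
  rewrite exchange_big.
  by apply: eq_bigr => q _; apply: eq_bigr => k _; apply: eq_bigr => p _; rewrite !mulrA.
transitivity (\sum_(q <- R) \sum_(p <- R) \sum_(k <- D h)
                G (p.2 * k.2 * q.1) (p.1 * k.1 * q.2)).
  apply: eq_bigr => q _; symmetry.
  by apply: (R_cop (G := fun x y => G (y * q.1) (x * q.2))); linearity.
transitivity (\sum_(p <- R) \sum_(q <- R) \sum_(k <- D h)
                G (p.2 * (q.1 * k.1)) (p.1 * (q.2 * k.2))).
  rewrite exchange_big; apply: eq_bigr => p _; rewrite exchange_big.
  rewrite (R_cop (G := fun x y => G (p.2 * x) (p.1 * y))); last by linearity.
  by apply: eq_bigr => k _; apply: eq_bigr => q _; rewrite !mulrA.
under eq_bigr do rewrite exchange_big.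
rewrite exchange_big.
by apply: eq_bigr => k _; apply: eq_bigr => p _; apply: eq_bigr => q _; rewrite !mulrA.
Qed.

Lemma mul_cop_antipode (F : H -> H -> CC) x k y : bilin F ->
  F (x * k) y = \sum_(n <- D k) \sum_(o <- D n.1) F (x * o.1) (y * (o.2 * S n.2)).
Proof.
move=> lin_F.
rewrite (coassoc hopfH (f := fun u v w => F (x * u) (y * (v * S w)))); last by linearity.
rewrite -[LHS](sum_counitr hopfH (g := fun w => F (x * w) y)); last by linearity.
apply: eq_bigr => n _.
by rewrite (sum_antipoder hopfH (g := fun w => F (x * n.1) (y * w))) ?mulr1 //; linearity.
Qed.

(* Write k (x) 1 as k1 (x) k2 S k3, move R21 R across k1 (x) k2, and contract
   S h1 h2 to eps h1. *)
Lemma onR21R_ad (F : H -> H -> CC) h : bilin F ->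
  \sum_(k <- D h) onR21R (fun X Y => F (S k.1 * X * k.2) Y) =
  \sum_(k <- D h) onR21R (fun X Y => F X (k.1 * Y * S k.2)).
Proof.
move=> lin_F.
pose Psi a b c d := onR21R (fun X Y => F (S a * (b * X)) (c * Y * S d)).
transitivity (\sum_(k <- D h) \sum_(n <- D k.2) \sum_(o <- D n.1) Psi k.1 o.1 o.2 n.2).
  apply: eq_bigr => k _.
  rewrite (eq_onR21R (fun X Y => mul_cop_antipode (S k.1 * X) k.2 Y lin_F)) onR21R_sum.
  apply: eq_bigr => n _; rewrite onR21R_sum.
  transitivity (\sum_(o <- D n.1)
      onR21R (fun X Y => F (S k.1 * (X * o.1)) (Y * o.2 * S n.2))).
    by apply: eq_bigr => o _; apply: eq_onR21R => X Y; rewrite !mulrA.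
  by symmetry; apply: (cop_R21R_comm (G := fun x y => F (S k.1 * x) (y * S n.2))); linearity.
transitivity (\sum_(k <- D h) \sum_(n <- D k.2) \sum_(o <- D n.2) Psi k.1 n.1 o.1 o.2).
  apply: eq_bigr => k _.
  by rewrite (coassoc hopfH (f := fun x y z => Psi k.1 x y z)) //; rewrite /Psi; linearity.
rewrite -(coassoc hopfH (f := fun x y z => \sum_(o <- D z) Psi x y o.1 o.2)); last first.
  by rewrite /Psi; linearity.
transitivity (\sum_(u <- D h) eH u.1 *
    \sum_(o <- D u.2) onR21R (fun X Y => F X (o.1 * Y * S o.2))).
  apply: eq_bigr => u _; rewrite exchange_big big_distrr; apply: eq_bigr => o _.
  pose g w := onR21R (fun X Y => F (w * X) (o.1 * Y * S o.2)).
  transitivity (\sum_(v <- D u.1) g (S v.1 * v.2)).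
    by apply: eq_bigr => v _; apply: eq_onR21R => X Y; rewrite !mulrA.
  rewrite (sum_antipodel hopfH (g := g)); last by rewrite /g; linearity.
  by congr (_ * _); apply: eq_onR21R => X Y; rewrite mul1r.
apply: (sum_counitl hopfH
  (g := fun z => \sum_(o <- D z) onR21R (fun X Y => F X (o.1 * Y * S o.2)))).
by linearity.
Qed.

(* (id (x) Delta)(R21 R) = R21 (R21 R)_13 R12, paired against a (x) b (x) c. *)
Lemma id_cop_R21R a b c :
  onR21R (fun X Y => pr X a * pr Y (b * c)) =
  \sum_(p <- R) \sum_(q <- R)
    pr (p.1 * q.2) b * onR21R (fun X Y => pr (p.2 * X * q.1) a * pr Y c).
Proof.
pose E (p p' x y : H * H) :=
  pr (p.2 * p'.2 * (y.1 * x.1)) a * pr (p.1 * x.2) b * pr (p'.1 * y.2) c.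
transitivity (\sum_(y <- R) \sum_(x <- R) \sum_(p <- R) \sum_(p' <- R) E p p' x y).
  transitivity (\sum_(q <- R) \sum_(l <- D q.2) \sum_(p <- R) \sum_(p' <- R)
     pr (p.2 * p'.2 * q.1) a * pr (p.1 * l.1) b * pr (p'.1 * l.2) c); last first.
    apply: (id_cop_R (f := fun x y z => \sum_(p <- R) \sum_(p' <- R)
      pr (p.2 * p'.2 * x) a * pr (p.1 * y) b * pr (p'.1 * z) c)).
    by linearity.
  transitivity (\sum_(p <- R) \sum_(q <- R) \sum_(k <- D p.1) \sum_(l <- D q.2)
     pr (p.2 * q.1) a * pr (k.1 * l.1) b * pr (k.2 * l.2) c).
    apply: eq_bigr => p _; apply: eq_bigr => q _.
    rewrite (pairingMr pairing) (cop_mul hopfH (f := fun x y => pr x b * pr y c)) /=;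
      last by linearity.
    rewrite big_distrr; apply: eq_bigr => k _; rewrite big_distrr; apply: eq_bigr => l _ /=.
    by rewrite mulrA.
  rewrite [LHS]exchange_big; apply: eq_bigr => q _.
  under eq_bigr do rewrite exchange_big.
  rewrite [LHS]exchange_big; apply: eq_bigr => l _.
  apply: (cop_id_R (f := fun x y z => pr (z * q.1) a * pr (x * l.1) b * pr (y * l.2) c)).
  by linearity.
symmetry.
transitivity (\sum_(p <- R) \sum_(x <- R) \sum_(p' <- R) \sum_(y <- R) E p p' x y).
  apply: eq_bigr => p _; apply: eq_bigr => x _; rewrite /onR21R big_distrr.
  apply: eq_bigr => p' _; rewrite big_distrr; apply: eq_bigr => y _ /=.
  by rewrite /E !mulrA (mulrC (pr (p.1 * x.2) b)).
under eq_bigr do under eq_bigr do rewrite exchange_big.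
under eq_bigr do rewrite exchange_big.
rewrite exchange_big.
by under eq_bigr do rewrite exchange_big.
Qed.

Lemma pairing_Qmap_comp (m : H -> H) a c : linear m ->
  pr (m (Q a)) c = onR21R (fun X Y => pr X a * pr (m Y) c).
Proof.
move=> lin_m; have lin_pr := pairing_scalarl pairing c.
rewrite /Qmap (linear_for_sum lin_m) (linear_for_sum lin_pr); apply: eq_bigr => p _.
rewrite (linear_for_sum lin_m) (linear_for_sum lin_pr); apply: eq_bigr => q _.
by rewrite (linear_forZ lin_m) /= (linear_forZ lin_pr).
Qed.

Lemma pairing_Qmap a c : pr (Q a) c = onR21R (fun X Y => pr X a * pr Y c).
Proof. exact: (pairing_Qmap_comp a c (@linear_id H)). Qed.

Lemma Qmap_linear : linear Q.
Proof.
move=> k a a'; apply: (pairing_separatesH pairing nondeg) => c.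
have lin_pr := pairing_scalarl pairing c.
rewrite pairing_Qmap (linear_forD lin_pr) (linear_forZ lin_pr) /= !pairing_Qmap.
rewrite -onR21R_mull -onR21R_add; apply: eq_onR21R => X Y.
have lin_prX := pairing_scalarr pairing X.
by rewrite (linear_forD lin_prX) (linear_forZ lin_prX) /= mulrDl mulrA.
Qed.

Lemma eps_Qmap a : eH (Q a) = eps hA a.
Proof.
have [lin_eH lin_pr] := (eps_scalar hopfH, pairing_scalarl pairing a).
transitivity (pr ((\sum_(p <- R) eH p.1 *: p.2) * (\sum_(q <- R) eH q.2 *: q.1)) a);
  last by rewrite eps_R1 eps_R2 mulr1 (pairing1l pairing).
rewrite /Qmap (linear_for_sum lin_eH) mulr_suml (linear_for_sum lin_pr).
apply: eq_bigr => p _.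
rewrite (linear_for_sum lin_eH) mulr_sumr (linear_for_sum lin_pr); apply: eq_bigr => q _.
rewrite (linear_forZ lin_eH) -scalerAl -scalerAr !(linear_forZ lin_pr) (epsM hopfH) /=.
by rewrite mulrC mulrA.
Qed.

Lemma Qmap1 : Q 1 = 1.
Proof.
transitivity ((\sum_(p <- R) eH p.2 *: p.1) * (\sum_(q <- R) eH q.1 *: q.2));
  last by rewrite eps_R1 eps_R2 mulr1.
rewrite /Qmap mulr_suml; apply: eq_bigr => p _; rewrite mulr_sumr; apply: eq_bigr => q _.
by rewrite (pairing1r pairing) (epsM hopfH) -scalerAl -scalerAr scalerA.
Qed.

Lemma pairing_actHA X h a :
  pr X (actHA hA pr h a) = \sum_(k <- D h) pr (S k.1 * X * k.2) a.
Proof.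
have lin_prX := pairing_scalarr pairing X.
rewrite /actHA (linear_for_sum lin_prX).
transitivity (\sum_(t <- cop3 hA a) \sum_(k <- D h)
    pr k.1 (anti hA t.1.1) * pr k.2 t.2 * pr X t.1.2).
  apply: eq_bigr => t _.
  by rewrite (linear_forZ lin_prX) /= (pairingMr pairing) big_distrl.
rewrite exchange_big; apply: eq_bigr => k _; rewrite (pairingM3 pairing).
by apply: eq_bigr => t _; rewrite -(pairing_antipode pairing) mulrAC.
Qed.

Lemma Qmap_actH h a : Q (actHA hA pr h a) = actHH hH h (Q a).
Proof.
apply: (pairing_separatesH pairing nondeg) => c.
rewrite pairing_Qmap /actHH (linear_for_sum (pairing_scalarl pairing c)).
rewrite (eq_onR21R (G' := fun X Y => \sum_(k <- D h) pr (S k.1 * X * k.2) a * pr Y c));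
  last by move=> X Y; rewrite pairing_actHA big_distrl.
rewrite onR21R_sum (onR21R_ad h (F := fun x y => pr x a * pr y c)); last by linearity.
apply: eq_bigr => k _.
by rewrite (pairing_Qmap_comp (m := fun x => k.1 * x * S k.2)) //; linearity.
Qed.

Lemma Qmap_actA b a : Q (actAA hA pr R b a) = actAH hH pr b (Q a).
Proof.
have lin_pr c := pairing_scalarl pairing c.
rewrite /actAA /actAH (linear_forB Qmap_linear) (linear_forZ Qmap_linear) Qmap1 /=.
congr (_ - _); apply: (pairing_separatesH pairing nondeg) => c.
rewrite [RHS](linear_for_sum (lin_pr c)).
transitivity (pr (Q a) (b * c)); last first.
  by rewrite (pairingMr pairing); apply: eq_bigr => k _; rewrite (linear_forZ (lin_pr c)).
rewrite [RHS]pairing_Qmap id_cop_R21R.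
rewrite (linear_for_sum Qmap_linear) (linear_for_sum (lin_pr c)); apply: eq_bigr => p _.
rewrite (linear_for_sum Qmap_linear) (linear_for_sum (lin_pr c)); apply: eq_bigr => q _.
rewrite (linear_for_sum Qmap_linear) (linear_for_sum (lin_pr c)).
rewrite (eq_onR21R (G' := fun X Y => \sum_(t <- cop3 hA a)
    pr p.2 t.1.1 * pr q.1 t.2 * (pr X t.1.2 * pr Y c))); last first.
  by move=> X Y; rewrite (pairingM3 pairing) mulr_suml; apply: eq_bigr => t _;
    rewrite !mulrA (mulrAC (pr p.2 t.1.1)).
rewrite onR21R_sum mulr_sumr; apply: eq_bigr => t _.
rewrite onR21R_mull (linear_forZ Qmap_linear) /= (linear_forZ (lin_pr c)) /=.
by rewrite pairing_Qmap !mulrA.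
Qed.

Lemma double_subrepH_Qmap (W : H -> Prop) : bijective Q ->
  double_subrepH hH pr W <->
  exists V : A -> Prop, double_subrepA hA pr R V /\
    (forall x, W x <-> exists2 a, V a & Q a = x).
Proof.
case=> Qinv _ QinvK; split.
  case=> [[W0 WD] W_eps W_actH W_actA]; exists (fun a => W (Q a)); split; last first.
    by move=> x; split=> [Wx | [a Wa <-] //]; exists (Qinv x); rewrite ?QinvK.
  split.
  - split=> [|k a a' Wa Wa']; first by rewrite (linear_for0 Qmap_linear).
    by rewrite Qmap_linear; apply: WD.
  - by move=> a /W_eps; rewrite eps_Qmap.
  - by move=> h a Wa; rewrite Qmap_actH; apply: W_actH.
  - by move=> b a Wa; rewrite Qmap_actA; apply: W_actA.
case=> V [[[V0 VD] V_eps V_actH V_actA] imW]; split.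
- split=> [|k _ _ /imW[a Va <-] /imW[a' Va' <-]]; apply/imW.
    by exists 0 => //; apply: (linear_for0 Qmap_linear).
  by exists (k *: a + a'); [apply: VD | apply: Qmap_linear].
- by move=> _ /imW[a Va <-]; rewrite eps_Qmap; apply: V_eps.
- move=> h _ /imW[a Va <-]; apply/imW.
  by exists (actHA hA pr h a); [apply: V_actH | apply: Qmap_actH].
- move=> b _ /imW[a Va <-]; apply/imW.
  by exists (actAA hA pr R b a); [apply: V_actA | apply: Qmap_actA].
Qed.
End Factorisable.

Theorem lemma4p1 (H A : algType CC) (hH : HopfStr H) (hA : HopfStr A)
  (R : seq (H * H)) (pairing : H -> A -> CC) :
  is_hopf hH -> is_hopf hA -> quasitriangular hH R ->
  hopf_pairing hH hA pairing -> nondegenerate_pairing pairing ->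
  bijective (Qmap pairing R) ->
  [/\ (forall a, eps hA a = 0 -> eps hH (Qmap pairing R a) = 0),
      (forall x, eps hH x = 0 -> exists2 a, eps hA a = 0 & Qmap pairing R a = x),
      (forall (h : H) (a : A), eps hA a = 0 ->
         Qmap pairing R (actHA hA pairing h a) = actHH hH h (Qmap pairing R a)),
      (forall (b a : A), eps hA a = 0 ->
         Qmap pairing R (actAA hA pairing R b a) = actAH hH pairing b (Qmap pairing R a)) &
      (forall W : H -> Prop, double_subrepH hH pairing W <->
         exists V : A -> Prop, double_subrepA hA pairing R V /\
           (forall x, W x <-> exists2 a, V a & Qmap pairing R a = x))].
Proof.
move=> hopfH _ qtR hp nondeg bijQ.
have eps_Q := eps_Qmap hopfH hp nondeg qtR.
split.
- by move=> a; rewrite eps_Q.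
- have [Qinv _ QinvK] := bijQ.
  by move=> x eps_x; exists (Qinv x); rewrite ?QinvK // -eps_Q QinvK.
- by move=> h a _; apply: Qmap_actH.
- by move=> b a _; apply: Qmap_actA.
- by move=> W; apply: double_subrepH_Qmap.
Qed.
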